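(* For each integer $n\ge1$, define the polynomial $$A_n(t)=\sum_{k=0}^{n}\frac{\cos\left(\frac{(n-k)\pi}{2}\right)k^n}{(n-k)!!\,(n+k)!!}\,t^k .$$ Then $A_n(t)=\frac{(-1)^n}{n!}\sum_{k=0}^{\lfloor n/2\rfloor}(-1)^k\binom{n}{k}\left(k-\frac{n}{2}\right)^n t^{n-2k}$, $A_n(0)=0$, $A_n(1)=\tfrac12$, and for $t\neq0$, $$A_n(t)+A_n(1/t)=\frac{(-1)^n}{n!}\sum_{k=0}^{n}(-1)^k\binom{n}{k}\left(k-\frac{n}{2}\right)^n t^{n-2k}.$$ Moreover, for $|t|$ and $|z|$ sufficiently small, $\sum_{n=1}^\infty t^nJ_n(nz)=\sum_{n=1}^\infty A_n(t)z^n$.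
   Context: $m!!$ denotes the double factorial, with $0!!=1$ (and $m!!=m\,(m-2)!!$, $1!!=1$). $J_n$ is the Bessel function of the first kind of order $n$. $\lfloor\cdot\rfloor$ denotes the integer part; $0^0$ is interpreted as $1$ where it occurs (the $k=0$ term in the first sum has $k^n=0$ for $n\ge1$). *)

From Stdlib Require Import Reals Lra Lia ZArith.
From Coquelicot Require Import Coquelicot.
Open Scope R_scope.

Fixpoint dfact (m : nat) : nat :=
  match m with
  | O => 1%nat
  | S O => 1%nat
  | S (S p as q) => (m * dfact p)%nat
  end.

Definition bessel_term (n : nat) (x : R) (m : nat) : R :=
  (-1) ^ m / (INR (fact m) * INR (fact (m + n))) * (x / 2) ^ (2 * m + n).

Definition besselJ (n : nat) (x : R) : R := Series (bessel_term n x).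

Definition A (n : nat) (t : R) : R :=
  sum_f_R0 (fun k => cos (INR (n - k) * PI / 2) * INR k ^ n
                     / (INR (dfact (n - k)) * INR (dfact (n + k))) * t ^ k) n.

From Stdlib Require Import Reals ZArith Lra Lia.
From Coquelicot Require Import Coquelicot.
Open Scope R_scope.

(* Rewriting the double factorials through factorials, the coefficient of t^(n-2i) in A_n is
   (-1)^n/n! (-1)^i C(n,i) (i - n/2)^n, and the coefficient of t^j z^(j+2m) in
   sum_N A_N(t) z^N is exactly the m-th term of t^j J_j(jz).  The symmetry i <-> n-i of these
   coefficients gives A_n(t) + A_n(1/t); at t = 1 the full sum is an n-th finite difference of
   x^n, namely (-1)^n n!, whence A_n(1) = 1/2.  The generating-function identity is a
   rearrangement of a triangular double series whose terms of total degree N are bounded by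
   (3|z|)^N, which follows from N^N <= 3^N N! <= 6^N m! (N-m)!. *)

(** * Finite sums *)

Lemma sum_f_R0_rev (f : nat -> R) n :
  sum_f_R0 f n = sum_f_R0 (fun k => f (n - k)%nat) n.
Proof.
  induction n as [|n IH]; [reflexivity|].
  rewrite (decomp_sum (fun k => f (S n - k)%nat)) by lia.
  rewrite tech5, IH. simpl pred.
  replace (S n - 0)%nat with (S n) by lia. simpl. ring.
Qed.

Lemma sum_f_R0_zero (f : nat -> R) N :
  (forall k, (k <= N)%nat -> f k = 0) -> sum_f_R0 f N = 0.
Proof.
  intros H. rewrite (sum_eq f (fun _ => 0)) by auto. rewrite sum_cte. ring.
Qed.

Lemma sum_f_R0_last (f : nat -> R) N :
  (forall k, (k < N)%nat -> f k = 0) -> sum_f_R0 f N = f N.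
Proof.
  intros H. destruct N as [|N]; [reflexivity|].
  rewrite tech5, sum_f_R0_zero by (intros; apply H; lia). ring.
Qed.

Lemma sum_f_R0_trunc (f : nat -> R) M N :
  (M <= N)%nat -> (forall k, (M < k <= N)%nat -> f k = 0) ->
  sum_f_R0 f N = sum_f_R0 f M.
Proof.
  intros HMN H. induction N as [|N IH].
  - replace M with 0%nat by lia. reflexivity.
  - destruct (Nat.eq_dec M (S N)) as [->|Hne]; [reflexivity|].
    rewrite tech5, IH, (H (S N)) by (try lia; intros; apply H; lia). ring.
Qed.

Lemma sum_f_R0_drop (f : nat -> R) j K :
  (forall k, (k < j)%nat -> f k = 0) ->
  sum_f_R0 f (j + K) = sum_f_R0 (fun k => f (j + k)%nat) K.
Proof.
  intros H. destruct j as [|j]; [reflexivity|].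
  rewrite (tech2 f j (S j + K)), sum_f_R0_zero by (try lia; intros; apply H; lia).
  replace (S j + K - S j)%nat with K by lia. ring.
Qed.

Lemma sum_f_R0_swap (F : nat -> nat -> R) n m :
  sum_f_R0 (fun k => sum_f_R0 (fun i => F k i) m) n =
  sum_f_R0 (fun i => sum_f_R0 (fun k => F k i) n) m.
Proof.
  induction n as [|n IH]; [reflexivity|].
  simpl sum_f_R0 at 1. rewrite IH, <- plus_sum. reflexivity.
Qed.

Lemma sum_f_R0_scal_l (f : nat -> R) c N :
  sum_f_R0 (fun i => c * f i) N = c * sum_f_R0 f N.
Proof. rewrite scal_sum. apply sum_eq. intros; ring. Qed.

Lemma sum_f_R0_even (g : nat -> R) N :
  (forall l, (l <= N)%nat -> Nat.odd l = true -> g l = 0) ->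
  sum_f_R0 g N = sum_f_R0 (fun i => g (2 * i)%nat) (Nat.div2 N).
Proof.
  intros Hodd.
  assert (Heven : forall m, (2 * m <= N)%nat ->
            sum_f_R0 g (2 * m) = sum_f_R0 (fun i => g (2 * i)%nat) m).
  { induction m as [|m IH]; intros Hm; [reflexivity|].
    replace (2 * S m)%nat with (S (S (2 * m))) by lia.
    rewrite !tech5, (Hodd (S (2 * m))), IH by (try lia; rewrite <- Nat.add_1_r; apply Nat.odd_odd).
    replace (S (S (2 * m))) with (2 * S m)%nat by lia. ring. }
  pose proof (Nat.div2_odd N) as HN.
  destruct (Nat.odd N) eqn:Hpar; simpl Nat.b2n in HN.
  - rewrite HN at 1. rewrite Nat.add_1_r, tech5, Heven by lia.
    replace (S (2 * Nat.div2 N)) with N by lia. rewrite (Hodd N); auto. ring.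
  - rewrite HN at 1. rewrite Nat.add_0_r. apply Heven. lia.
Qed.

Lemma sum_f_R0_fold (h : nat -> R) n :
  (forall k, (2 * k = n)%nat -> h k = 0) ->
  sum_f_R0 h n = sum_f_R0 (fun k => h k + h (n - k)%nat) (Nat.div2 n).
Proof.
  intros Hmid. pose proof (Nat.div2_odd n) as Hn.
  rewrite (sum_eq h (fun k => (if Nat.leb (2 * k) n then h k else 0) +
                              (if Nat.leb (2 * k) n then 0 else h k)))
    by (intros; destruct (Nat.leb (2 * i) n); ring).
  rewrite !plus_sum, (sum_f_R0_rev (fun k => if Nat.leb (2 * k) n then 0 else h k)).
  rewrite !(sum_f_R0_trunc _ (Nat.div2 n) n); try lia.
  - f_equal; apply sum_eq; intros k Hk.
    + rewrite (proj2 (Nat.leb_le (2 * k) n)) by lia. reflexivity.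
    + destruct (Nat.leb (2 * (n - k)) n) eqn:Hle; [|reflexivity].
      apply Nat.leb_le in Hle. symmetry. apply Hmid. lia.
  - intros k Hk. destruct (Nat.leb (2 * (n - k)) n) eqn:Hle; [reflexivity|].
    apply Nat.leb_gt in Hle. destruct (Nat.odd n); simpl in Hn; lia.
  - intros k Hk. rewrite (proj2 (Nat.leb_gt (2 * k) n)); [reflexivity|].
    destruct (Nat.odd n); simpl in Hn; lia.
Qed.

(** * The coefficients of [A n] *)

Lemma INR_dfact_double i : INR (dfact (2 * i)) = 2 ^ i * INR (fact i).
Proof.
  induction i as [|i IH]; [simpl; ring|].
  replace (2 * S i)%nat with (S (S (2 * i))) by lia.
  change (dfact (S (S (2 * i)))) with (S (S (2 * i)) * dfact (2 * i))%nat.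
  rewrite mult_INR, IH, fact_simpl, mult_INR, !S_INR, mult_INR. simpl. ring.
Qed.

Lemma cos_double_PI2 i : cos (INR (2 * i) * PI / 2) = (-1) ^ i.
Proof.
  replace (INR (2 * i) * PI / 2) with (INR i * PI) by (rewrite mult_INR; simpl; field).
  induction i as [|i IH]; [simpl; rewrite Rmult_0_l; apply cos_0|].
  rewrite S_INR, Rmult_plus_distr_r, Rmult_1_l, neg_cos, IH. simpl; ring.
Qed.

Lemma cos_odd_PI2 l : Nat.odd l = true -> cos (INR l * PI / 2) = 0.
Proof.
  intros Hl. pose proof (Nat.div2_odd l) as Hdiv. rewrite Hl in Hdiv. cbn [Nat.b2n] in Hdiv.
  rewrite Hdiv, plus_INR, mult_INR. generalize (Nat.div2 l) as i; intros i.
  replace ((INR 2 * INR i + INR 1) * PI / 2) with (PI / 2 + INR i * PI) by (simpl; field).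
  induction i as [|i IH]; [simpl; rewrite Rmult_0_l, Rplus_0_r; apply cos_PI2|].
  rewrite S_INR, Rmult_plus_distr_r, Rmult_1_l, <- Rplus_assoc, neg_cos, IH. ring.
Qed.

Lemma INR_fact_pos n : 0 < INR (fact n).
Proof. apply lt_0_INR, lt_O_fact. Qed.

Lemma neg1_pow_sqr m : (-1) ^ m * (-1) ^ m = 1.
Proof. rewrite <- Rpow_mult_distr. replace (-1 * -1) with 1 by ring. apply pow1. Qed.

Definition Acoef (n k : nat) : R :=
  cos (INR (n - k) * PI / 2) * INR k ^ n / (INR (dfact (n - k)) * INR (dfact (n + k))).

Lemma A_Acoef n t : A n t = sum_f_R0 (fun k => Acoef n k * t ^ k) n.
Proof. reflexivity. Qed.

Lemma Acoef_odd n k : Nat.odd (n - k) = true -> Acoef n k = 0.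
Proof. intros H. unfold Acoef. rewrite cos_odd_PI2 by exact H. unfold Rdiv. ring. Qed.

Lemma Acoef_0 n : (1 <= n)%nat -> Acoef n 0 = 0.
Proof. intros Hn. unfold Acoef. rewrite pow_i by (simpl; lia). unfold Rdiv. ring. Qed.

Lemma Acoef_add_double j m :
  Acoef (j + 2 * m) j =
  (-1) ^ m / (INR (fact m) * INR (fact (m + j))) * (INR j / 2) ^ (j + 2 * m).
Proof.
  unfold Acoef.
  replace (j + 2 * m - j)%nat with (2 * m)%nat by lia.
  replace (j + 2 * m + j)%nat with (2 * (m + j))%nat by lia.
  rewrite cos_double_PI2, !INR_dfact_double.
  unfold Rdiv. rewrite Rpow_mult_distr, pow_inv.
  replace (2 ^ (j + 2 * m)) with (2 ^ m * 2 ^ (m + j)) by (rewrite <- pow_add; f_equal; lia).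
  pose proof (INR_fact_pos m). pose proof (INR_fact_pos (m + j)).
  pose proof (pow_lt 2 m ltac:(lra)). pose proof (pow_lt 2 (m + j) ltac:(lra)).
  field. repeat split; lra.
Qed.

Definition Bcoef (n k : nat) : R := (-1) ^ k * Binomial.C n k * (INR k - INR n / 2) ^ n.

Lemma Acoef_reflect n i : (2 * i <= n)%nat ->
  Acoef n (n - 2 * i) = (-1) ^ n / INR (fact n) * Bcoef n i.
Proof.
  intros Hi. remember (n - 2 * i)%nat as j eqn:Hj.
  replace n with (j + 2 * i)%nat by lia.
  rewrite Acoef_add_double. unfold Bcoef, Binomial.C.
  replace (j + 2 * i - i)%nat with (i + j)%nat by lia.
  replace (INR i - INR (j + 2 * i) / 2) with (-1 * (INR j / 2))
    by (rewrite plus_INR, mult_INR; simpl; field).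
  rewrite Rpow_mult_distr.
  pose proof (INR_fact_pos i). pose proof (INR_fact_pos (i + j)).
  pose proof (INR_fact_pos (j + 2 * i)). pose proof (neg1_pow_sqr (j + 2 * i)) as Hsq.
  field_simplify_eq; [|repeat split; lra].
  replace (((-1) ^ (j + 2 * i)) ^ 2) with 1 by (rewrite <- Hsq; ring). ring.
Qed.

Lemma A_closed_form n t :
  A n t = (-1) ^ n / INR (fact n) *
          sum_f_R0 (fun k => Bcoef n k * t ^ (n - 2 * k)) (Nat.div2 n).
Proof.
  pose proof (Nat.div2_odd n).
  rewrite A_Acoef, sum_f_R0_rev, (sum_f_R0_even (fun k => Acoef n (n - k) * t ^ (n - k))).
  - rewrite <- sum_f_R0_scal_l. apply sum_eq. intros i Hi.
    rewrite Acoef_reflect by lia. ring.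
  - intros l Hl Hodd. rewrite Acoef_odd; [ring|].
    replace (n - (n - l))%nat with l by lia. exact Hodd.
Qed.

Lemma A_0 n : (1 <= n)%nat -> A n 0 = 0.
Proof.
  intros Hn. rewrite A_Acoef. apply sum_f_R0_zero. intros [|k] _.
  - rewrite Acoef_0 by exact Hn. ring.
  - rewrite pow_i by lia. ring.
Qed.

Lemma Bcoef_sym n k : (k <= n)%nat -> Bcoef n (n - k) = Bcoef n k.
Proof.
  intros Hk. unfold Bcoef. rewrite <- pascal_step1, minus_INR by lia.
  replace (INR n - INR k - INR n / 2) with (-1 * (INR k - INR n / 2)) by field.
  rewrite Rpow_mult_distr.
  replace ((-1) ^ n) with ((-1) ^ (n - k) * (-1) ^ k) by (rewrite <- pow_add; f_equal; lia).
  set (X := Binomial.C n k * (INR k - INR n / 2) ^ n).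
  transitivity ((-1) ^ k * X * ((-1) ^ (n - k) * (-1) ^ (n - k))); [unfold X; ring|].
  rewrite neg1_pow_sqr. unfold X. ring.
Qed.

Lemma Bcoef_mid n k : (1 <= n)%nat -> (2 * k = n)%nat -> Bcoef n k = 0.
Proof.
  intros Hn Hk. unfold Bcoef.
  replace (INR k - INR n / 2) with 0 by (rewrite <- Hk, mult_INR; simpl; field).
  rewrite pow_i by lia. ring.
Qed.

Lemma A_add_inv n t : (1 <= n)%nat -> t <> 0 ->
  A n t + A n (/ t) = (-1) ^ n / INR (fact n) *
    sum_f_R0 (fun k => Bcoef n k * powerRZ t (Z.of_nat n - 2 * Z.of_nat k)%Z) n.
Proof.
  intros Hn Ht. pose proof (Nat.div2_odd n).
  rewrite !A_closed_form, <- Rmult_plus_distr_l, <- plus_sum,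
    (sum_f_R0_fold (fun k => Bcoef n k * powerRZ t (Z.of_nat n - 2 * Z.of_nat k)%Z)).
  - f_equal. apply sum_eq. intros k Hk.
    rewrite Bcoef_sym by lia. f_equal; f_equal.
    + rewrite pow_powerRZ. f_equal. lia.
    + replace (Z.of_nat n - 2 * Z.of_nat (n - k))%Z with (- Z.of_nat (n - 2 * k))%Z by lia.
      rewrite powerRZ_neg', <- pow_powerRZ, pow_inv. reflexivity.
  - intros k Hk. rewrite Bcoef_mid by lia. ring.
Qed.

(** * Finite differences of powers *)

Definition alt_binom_sum (n : nat) (f : nat -> R) : R :=
  sum_f_R0 (fun k => (-1) ^ k * Binomial.C n k * f k) n.

Lemma alt_binom_sum_ext n f g :
  (forall k, (k <= n)%nat -> f k = g k) -> alt_binom_sum n f = alt_binom_sum n g.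
Proof. intros H. apply sum_eq. intros k Hk. rewrite H by exact Hk. reflexivity. Qed.

Lemma alt_binom_sum_lin n (c : nat -> R) (g : nat -> nat -> R) p :
  alt_binom_sum n (fun k => sum_f_R0 (fun i => c i * g i k) p) =
  sum_f_R0 (fun i => c i * alt_binom_sum n (g i)) p.
Proof.
  unfold alt_binom_sum.
  rewrite (sum_eq (fun i => c i * sum_f_R0 (fun k => (-1) ^ k * Binomial.C n k * g i k) n)
                  (fun i => sum_f_R0 (fun k => (-1) ^ k * Binomial.C n k * (c i * g i k)) n))
    by (intros; rewrite <- sum_f_R0_scal_l; apply sum_eq; intros; ring).
  rewrite <- sum_f_R0_swap. apply sum_eq. intros k _.
  rewrite <- sum_f_R0_scal_l. reflexivity.
Qed.

Lemma alt_binom_sum_S n f :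
  alt_binom_sum (S n) f = alt_binom_sum n (fun k => f k - f (S k)).
Proof.
  unfold alt_binom_sum. rewrite decomp_sum by lia. simpl pred.
  rewrite (sum_eq (fun k => (-1) ^ k * Binomial.C n k * (f k - f (S k)))
                  (fun k => (-1) ^ k * Binomial.C n k * f k +
                              (-1) ^ S k * Binomial.C n k * f (S k)))
    by (intros; cbn [pow]; ring).
  rewrite plus_sum. destruct n as [|p].
  - simpl. rewrite !C_n_0, C_n_n. ring.
  - rewrite (decomp_sum (fun k => (-1) ^ k * Binomial.C (S p) k * f k)) by lia. simpl pred.
    rewrite !tech5, !C_n_n.
    rewrite (sum_eq (fun k => (-1) ^ S k * Binomial.C (S (S p)) (S k) * f (S k))
                    (fun k => (-1) ^ S k * Binomial.C (S p) (S k) * f (S k) +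
                              (-1) ^ S k * Binomial.C (S p) k * f (S k)))
      by (intros; rewrite <- pascal by lia; ring).
    rewrite plus_sum, !C_n_0. cbn [pow]. ring.
Qed.

Lemma pow_S_sub y p :
  (y + 1) ^ S p - y ^ S p = sum_f_R0 (fun i => Binomial.C (S p) i * y ^ i) p.
Proof.
  rewrite binomial, tech5, C_n_n, Nat.sub_diag.
  rewrite (sum_eq _ (fun i => Binomial.C (S p) i * y ^ i)) by (intros; rewrite pow1; ring).
  simpl. ring.
Qed.

Lemma C_S_n n : Binomial.C (S n) n = INR (S n).
Proof.
  unfold Binomial.C. replace (S n - n)%nat with 1%nat by lia.
  rewrite fact_simpl, mult_INR. pose proof (INR_fact_pos n). simpl. field. lra.
Qed.

Lemma alt_binom_sum_pow n x :
  (forall m, (m < n)%nat -> alt_binom_sum n (fun k => (x + INR k) ^ m) = 0) /\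
  alt_binom_sum n (fun k => (x + INR k) ^ n) = (-1) ^ n * INR (fact n).
Proof.
  induction n as [|n [Hlow Hdiag]].
  - split; [intros; lia|]. unfold alt_binom_sum. simpl. rewrite C_n_0. ring.
  - assert (Hstep : forall p, alt_binom_sum (S n) (fun k => (x + INR k) ^ S p) =
              sum_f_R0 (fun i => - Binomial.C (S p) i *
                                 alt_binom_sum n (fun k => (x + INR k) ^ i)) p).
    { intros p. rewrite alt_binom_sum_S, <- alt_binom_sum_lin.
      apply alt_binom_sum_ext. intros k _.
      rewrite S_INR, <- Rplus_assoc.
      transitivity (-1 * ((x + INR k + 1) ^ S p - (x + INR k) ^ S p)); [ring|].
      rewrite pow_S_sub, <- sum_f_R0_scal_l. apply sum_eq. intros; ring. }
    split.
    + intros [|p] Hp.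
      * rewrite alt_binom_sum_S. apply sum_f_R0_zero. intros; simpl; ring.
      * rewrite Hstep. apply sum_f_R0_zero. intros i Hi. rewrite Hlow by lia. ring.
    + rewrite Hstep, sum_f_R0_last, Hdiag, C_S_n.
      * rewrite fact_simpl, mult_INR. cbn [pow]. ring.
      * intros i Hi. rewrite Hlow by exact Hi. ring.
Qed.

Lemma A_1 n : (1 <= n)%nat -> A n 1 = 1 / 2.
Proof.
  intros Hn. pose proof (A_add_inv n 1 Hn R1_neq_R0) as H. rewrite Rinv_1 in H.
  replace (sum_f_R0 _ n) with (alt_binom_sum n (fun k => (- INR n / 2 + INR k) ^ n)) in H.
  - rewrite (proj2 (alt_binom_sum_pow n _)) in H.
    pose proof (INR_fact_pos n). pose proof (neg1_pow_sqr n).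
    replace ((-1) ^ n / INR (fact n) * ((-1) ^ n * INR (fact n))) with 1 in H
      by (field_simplify; lra).
    lra.
  - apply sum_eq. intros k _. rewrite powerRZ_R1. unfold Bcoef.
    replace (- INR n / 2 + INR k) with (INR k - INR n / 2) by field. ring.
Qed.

(** * Rearranging the Bessel double series *)

Lemma sum_f_R0_ge_term (f : nat -> R) k N :
  (forall i, 0 <= f i) -> (k <= N)%nat -> f k <= sum_f_R0 f N.
Proof.
  intros Hf Hk. induction N as [|N IH].
  - replace k with 0%nat by lia. simpl; lra.
  - rewrite tech5. destruct (Nat.eq_dec k (S N)) as [->|Hne].
    + pose proof (cond_pos_sum f N Hf). lra.
    + specialize (IH ltac:(lia)). specialize (Hf (S N)). lra.
Qed.

Lemma pow_le1_antimono x a b : 0 <= x <= 1 -> (a <= b)%nat -> x ^ b <= x ^ a.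
Proof.
  intros Hx Hab. replace b with (a + (b - a))%nat by lia. rewrite pow_add.
  pose proof (pow_le x a (proj1 Hx)).
  pose proof (pow_incr x 1 (b - a) Hx). rewrite pow1 in *. nra.
Qed.

Lemma pow_self_le_fact N : INR N ^ N <= 3 ^ N * INR (fact N).
Proof.
  pose proof (INR_fact_pos N).
  assert (Hexp : INR N ^ N / INR (fact N) <= exp 1 ^ N).
  { replace (exp 1 ^ N) with (exp (INR N)).
    - eapply Rle_trans; [|apply (exp_ge_taylor _ N (pos_INR N))].
      apply (sum_f_R0_ge_term (fun k => INR N ^ k / INR (fact k))); [|lia].
      intros i. pose proof (INR_fact_pos i).
      apply Rdiv_le_0_compat; [apply pow_le, pos_INR|lra].
    - clear. induction N as [|N IH]; [apply exp_0|].
      rewrite S_INR, exp_plus, IH. simpl. ring. }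
  assert (exp 1 ^ N <= 3 ^ N) by (apply pow_incr; split; [apply Rlt_le, exp_pos|apply exp_le_3]).
  apply Rle_div_l in Hexp; [|lra]. nra.
Qed.

Lemma binomial_le_pow2 N m : (m <= N)%nat -> Binomial.C N m <= 2 ^ N.
Proof.
  intros Hm. replace 2 with (1 + 1) by ring. rewrite binomial.
  eapply Rle_trans; [|apply (sum_f_R0_ge_term _ m N); [|exact Hm]]; cbv beta.
  - rewrite !pow1. lra.
  - intros i. rewrite !pow1, !Rmult_1_r. unfold Binomial.C.
    pose proof (INR_fact_pos N). pose proof (INR_fact_pos i). pose proof (INR_fact_pos (N - i)).
    apply Rlt_le, Rdiv_lt_0_compat; [lra|apply Rmult_lt_0_compat; lra].
Qed.

Lemma fact_add_le m j : INR (fact (m + j)) <= 2 ^ (m + j) * (INR (fact m) * INR (fact j)).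
Proof.
  pose proof (binomial_le_pow2 (m + j) m ltac:(lia)) as HC. unfold Binomial.C in HC.
  replace (m + j - m)%nat with j in HC by lia.
  pose proof (INR_fact_pos m). pose proof (INR_fact_pos j).
  apply Rle_div_l in HC; [lra|]. apply Rmult_lt_0_compat; lra.
Qed.

Lemma bessel_term_bound j m z :
  Rabs (bessel_term j (INR j * z) m) <= (3 * Rabs z) ^ (2 * m + j).
Proof.
  set (N := (2 * m + j)%nat).
  pose proof (INR_fact_pos m). pose proof (INR_fact_pos (m + j)).
  assert (HD : 0 < INR (fact m) * INR (fact (m + j))) by (apply Rmult_lt_0_compat; lra).
  assert (Hcoef : (INR j / 2) ^ N <= 3 ^ N * (INR (fact m) * INR (fact (m + j)))).
  { assert (Hpow : (INR j / 2) ^ N * 2 ^ N = INR j ^ N)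
      by (rewrite <- Rpow_mult_distr; f_equal; field).
    pose proof (pow_self_le_fact N).
    pose proof (fact_add_le m (m + j)) as Hf. replace (m + (m + j))%nat with N in Hf by lia.
    assert (INR j ^ N <= INR N ^ N) by (apply pow_incr; split; [apply pos_INR|apply le_INR; lia]).
    pose proof (pow_lt 2 N ltac:(lra)). pose proof (pow_le 3 N ltac:(lra)).
    assert (INR (fact N) * 3 ^ N <= 2 ^ N * (INR (fact m) * INR (fact (m + j))) * 3 ^ N)
      by (apply Rmult_le_compat_r; lra).
    nra. }
  replace (bessel_term j (INR j * z) m)
    with ((-1) ^ m * ((INR j / 2) ^ N / (INR (fact m) * INR (fact (m + j)))) * z ^ N)
    by (unfold bessel_term; fold N; replace (INR j * z / 2) with (INR j / 2 * z) by field;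
        rewrite Rpow_mult_distr; field; lra).
  rewrite !Rabs_mult, pow_1_abs, Rmult_1_l, <- RPow_abs, Rpow_mult_distr.
  apply Rmult_le_compat_r; [apply pow_le, Rabs_pos|].
  rewrite Rabs_pos_eq.
  - apply Rle_div_l; lra.
  - apply Rdiv_le_0_compat; [apply pow_le, Rdiv_le_0_compat; [apply pos_INR|lra]|exact HD].
Qed.

Lemma series_tail_bound (a : nat -> R) (q l : R) K :
  0 <= q < 1 -> (forall n, Rabs (a n) <= q ^ n) -> is_series a l ->
  Rabs (l - sum_f_R0 a K) <= q ^ S K / (1 - q).
Proof.
  intros Hq Hb Hs.
  assert (Htail : is_series (fun k => a (S K + k)%nat) (l - sum_f_R0 a K)).
  { apply is_series_incr_n; [lia|]. simpl pred. rewrite sum_n_Reals.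
    match goal with |- is_series _ ?x => replace x with l; [exact Hs|] end.
    unfold plus; simpl. ring. }
  assert (Hgeom : is_series (fun k => q ^ S K * q ^ k) (q ^ S K / (1 - q))).
  { apply (is_series_scal_l (q ^ S K) (fun k => q ^ k)), is_series_geom.
    rewrite Rabs_pos_eq; lra. }
  assert (Hdom : forall n, 0 <= Rabs (a (S K + n)%nat) <= q ^ S K * q ^ n).
  { intros n. split; [apply Rabs_pos|]. rewrite <- pow_add. apply Hb. }
  rewrite <- (is_series_unique _ _ Htail).
  eapply Rle_trans; [apply Series_Rabs|].
  - apply (@ex_series_le R_AbsRing R_CompleteNormedModule _ (fun n => q ^ S K * q ^ n)).
    + intros n. change (norm _) with (Rabs (Rabs (a (S K + n)%nat))).
      rewrite Rabs_Rabsolu. apply Hdom.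
    + eexists; exact Hgeom.
  - rewrite <- (is_series_unique _ _ Hgeom). apply Series_le; [apply Hdom|].
    eexists; exact Hgeom.
Qed.

Lemma is_series_approx (c r e : nat -> R) (l : R) :
  is_series r l -> is_lim_seq e 0 ->
  (forall K, Rabs (sum_f_R0 c K - sum_f_R0 r K) <= e K) -> is_series c l.
Proof.
  intros Hr He Hce.
  apply is_series_Reals, is_lim_seq_Reals. apply is_series_Reals, is_lim_seq_Reals in Hr.
  apply is_lim_seq_ext with (fun K => sum_f_R0 r K + (sum_f_R0 c K - sum_f_R0 r K));
    [intros; ring|].
  replace (Finite l) with (Rbar_plus l 0) by (simpl; f_equal; ring).
  apply is_lim_seq_plus'; [exact Hr|].
  apply is_lim_seq_le_le with (fun K => - e K) e; [|  |exact He].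
  - intros K. apply Rabs_le_between, Hce.
  - replace (Finite 0) with (Rbar_opp 0) by (simpl; f_equal; ring).
    apply (is_lim_seq_opp e), He.
Qed.

Lemma INR_S_le_pow2 N : INR (S N) <= 2 ^ N.
Proof.
  induction N as [|N IH]; [simpl; lra|]. rewrite S_INR. cbn [pow].
  pose proof (pow_R1_Rle 2 N ltac:(lra)). lra.
Qed.

Section TriangularArray.

Variables (v : nat -> nat -> R) (q : R).
Hypotheses (Hq : 0 <= q) (Hq2 : 2 * q < 1).
Hypothesis Hbound : forall j N, Rabs (v j N) <= q ^ N.
Hypothesis Hupper : forall j N, (N < j)%nat -> v j N = 0.

Let diag (N : nat) : R := sum_f_R0 (fun j => v j N) N.

Lemma triangular_column_is_series j : is_series (v j) (Series (v j)).
Proof.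
  apply Series_correct.
  apply (@ex_series_le R_AbsRing R_CompleteNormedModule _ (fun N => q ^ N));
    [intros; apply Hbound|].
  apply ex_series_geom. rewrite Rabs_pos_eq; lra.
Qed.

Lemma triangular_diag_bound N : Rabs (diag N) <= (2 * q) ^ N.
Proof.
  unfold diag. eapply Rle_trans; [apply Rsum_abs|].
  eapply Rle_trans; [apply (sum_Rle _ (fun _ => q ^ N)); intros; apply Hbound|].
  rewrite sum_cte, Rpow_mult_distr, Rmult_comm.
  apply Rmult_le_compat_r; [apply pow_le; lra|apply INR_S_le_pow2].
Qed.

Lemma triangular_partial_sums K :
  Rabs (sum_f_R0 (fun j => Series (v j)) K - sum_f_R0 diag K) <=
  2 * q / (1 - q) * (2 * q) ^ K.
Proof.
  assert (Hdiag : sum_f_R0 diag K = sum_f_R0 (fun j => sum_f_R0 (v j) K) K).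
  { unfold diag. rewrite <- sum_f_R0_swap. apply sum_eq. intros N HN.
    symmetry. apply sum_f_R0_trunc; [lia|]. intros k Hk. apply Hupper. lia. }
  rewrite Hdiag, <- minus_sum.
  eapply Rle_trans; [apply Rsum_abs|].
  eapply Rle_trans; [apply (sum_Rle _ (fun _ => q ^ S K / (1 - q)))|].
  - intros j _. apply series_tail_bound; [lra|apply Hbound|apply triangular_column_is_series].
  - rewrite sum_cte. pose proof (INR_S_le_pow2 K).
    replace (2 * q / (1 - q) * (2 * q) ^ K) with (2 ^ K * (q ^ S K / (1 - q)) * 2)
      by (cbn [pow]; rewrite Rpow_mult_distr; field; lra).
    set (X := q ^ S K / (1 - q)).
    assert (0 <= X) by (apply Rdiv_le_0_compat; [apply pow_le|]; lra).
    assert (0 <= X * 2 ^ K) by (apply Rmult_le_pos; [|apply pow_le]; lra).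
    apply Rle_trans with (X * 2 ^ K); [apply Rmult_le_compat_l|]; lra.
Qed.

Lemma triangular_series_interchange :
  exists L : R, is_series (fun j => Series (v j)) L /\ is_series diag L.
Proof.
  assert (Hq2' : Rabs (2 * q) < 1) by (rewrite Rabs_pos_eq; lra).
  assert (Hdiag : ex_series diag).
  { apply (@ex_series_le R_AbsRing R_CompleteNormedModule _ (fun N => (2 * q) ^ N)).
    - intros N. apply triangular_diag_bound.
    - apply ex_series_geom, Hq2'. }
  exists (Series diag). split; [|apply Series_correct, Hdiag].
  apply (is_series_approx _ diag (fun K => 2 * q / (1 - q) * (2 * q) ^ K)).
  - apply Series_correct, Hdiag.
  - replace (Finite 0) with (Rbar_mult (2 * q / (1 - q)) 0) by (simpl; f_equal; ring).
    apply is_lim_seq_scal_l, is_lim_seq_geom, Hq2'.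
  - apply triangular_partial_sums.
Qed.

End TriangularArray.

Lemma is_series_single (a : nat -> R) :
  (forall n, (0 < n)%nat -> a n = 0) -> is_series a (a 0%nat).
Proof.
  intros H. apply is_series_Reals. intros eps Heps. exists 0%nat. intros n _.
  replace (sum_f_R0 a n) with (a 0%nat).
  - unfold Rdist. rewrite Rminus_diag_eq, Rabs_R0 by reflexivity. exact Heps.
  - destruct n as [|n]; [reflexivity|].
    rewrite decomp_sum by lia. rewrite sum_f_R0_zero by (intros; apply H; lia). ring.
Qed.

Lemma is_series_shift (a : nat -> R) (l : R) :
  is_series a l -> is_series (fun n => a (S n)) (l - a 0%nat).
Proof.
  intros Ha. apply is_series_incr_1.
  match goal with |- is_series _ ?x => replace x with l; [exact Ha|] end.
  unfold plus; simpl. ring.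
Qed.

Lemma is_series_sparse (u : nat -> R) j (l : R) :
  (forall N, (N < j)%nat -> u N = 0) -> (forall m, u (j + 2 * m + 1)%nat = 0) ->
  is_series (fun m => u (j + 2 * m)%nat) l -> is_series u l.
Proof.
  intros Hlow Hodd Hl. apply is_series_Reals in Hl. apply is_series_Reals.
  assert (Hpartial : forall K,
            sum_f_R0 u (j + K) = sum_f_R0 (fun m => u (j + 2 * m)%nat) (Nat.div2 K)).
  { intros K. rewrite sum_f_R0_drop by exact Hlow.
    apply (sum_f_R0_even (fun k => u (j + k)%nat)).
    intros k _ Hk. pose proof (Nat.div2_odd k) as Hdiv. rewrite Hk in Hdiv.
    cbn [Nat.b2n] in Hdiv. rewrite Hdiv, Nat.add_assoc. apply Hodd. }
  intros eps Heps. destruct (Hl eps Heps) as [M HM].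
  exists (j + 2 * M)%nat. intros n Hn.
  replace n with (j + (n - j))%nat by lia. rewrite Hpartial. apply HM.
  apply Nat.div2_le_lower_bound. lia.
Qed.

(* The guard matters: [Acoef N j] does not vanish for j > N, because of truncated subtraction. *)
Definition bessel_array (t z : R) (j N : nat) : R :=
  if Nat.leb j N then Acoef N j * t ^ j * z ^ N else 0.

Lemma bessel_array_upper t z j N : (N < j)%nat -> bessel_array t z j N = 0.
Proof. intros H. unfold bessel_array. rewrite (proj2 (Nat.leb_gt j N)) by exact H. reflexivity. Qed.

Lemma bessel_array_even t z j m :
  bessel_array t z j (j + 2 * m) = t ^ j * bessel_term j (INR j * z) m.
Proof.
  unfold bessel_array, bessel_term. rewrite (proj2 (Nat.leb_le j (j + 2 * m))) by lia.
  rewrite Acoef_add_double. replace (2 * m + j)%nat with (j + 2 * m)%nat by lia.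
  replace (INR j * z / 2) with (INR j / 2 * z) by field.
  rewrite Rpow_mult_distr. ring.
Qed.

Lemma bessel_array_odd t z j m : bessel_array t z j (j + 2 * m + 1) = 0.
Proof.
  unfold bessel_array. destruct (Nat.leb j (j + 2 * m + 1)); [|reflexivity].
  rewrite Acoef_odd; [ring|].
  replace (j + 2 * m + 1 - j)%nat with (2 * m + 1)%nat by lia. apply Nat.odd_odd.
Qed.

Lemma bessel_array_diag t z N :
  sum_f_R0 (fun j => bessel_array t z j N) N = A N t * z ^ N.
Proof.
  rewrite A_Acoef, Rmult_comm, scal_sum. apply sum_eq. intros j Hj.
  unfold bessel_array. rewrite (proj2 (Nat.leb_le j N)) by exact Hj. ring.
Qed.

Lemma bessel_array_first_column t z N : (0 < N)%nat -> bessel_array t z 0 N = 0.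
Proof. intros HN. unfold bessel_array. simpl. rewrite Acoef_0 by exact HN. ring. Qed.

Lemma bessel_array_bound t z j N :
  Rabs t <= 1 -> Rabs (bessel_array t z j N) <= (3 * Rabs z) ^ N.
Proof.
  intros Ht. pose proof (Rabs_pos z).
  assert (Hq : 0 <= (3 * Rabs z) ^ N) by (apply pow_le; lra).
  destruct (le_lt_dec j N) as [HjN|HjN];
    [|rewrite bessel_array_upper, Rabs_R0 by exact HjN; exact Hq].
  pose proof (Nat.div2_odd (N - j)) as Hdiv. set (m := Nat.div2 (N - j)) in Hdiv.
  destruct (Nat.odd (N - j)); cbn [Nat.b2n] in Hdiv.
  - replace N with (j + 2 * m + 1)%nat in * by lia.
    rewrite bessel_array_odd, Rabs_R0. exact Hq.
  - replace N with (j + 2 * m)%nat in * by lia.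
    rewrite bessel_array_even, Rabs_mult, <- RPow_abs, Nat.add_comm.
    pose proof (bessel_term_bound j m z).
    pose proof (pow_le (Rabs t) j (Rabs_pos t)).
    pose proof (pow_le1_antimono (Rabs t) 0 j ltac:(split; [apply Rabs_pos|exact Ht])
                  ltac:(lia)).
    pose proof (Rabs_pos (bessel_term j (INR j * z) m)). simpl in *. nra.
Qed.

Lemma bessel_ex_series j z : 3 * Rabs z < 1 -> ex_series (bessel_term j (INR j * z)).
Proof.
  intros Hz. pose proof (Rabs_pos z).
  apply (@ex_series_le R_AbsRing R_CompleteNormedModule _ (fun m => (3 * Rabs z) ^ m)).
  - intros m. change (norm _) with (Rabs (bessel_term j (INR j * z) m)).
    eapply Rle_trans; [apply bessel_term_bound|].
    apply pow_le1_antimono; [lra|lia].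
  - apply ex_series_geom. rewrite Rabs_pos_eq; lra.
Qed.

Lemma bessel_array_column t z j :
  3 * Rabs z < 1 -> is_series (bessel_array t z j) (t ^ j * besselJ j (INR j * z)).
Proof.
  intros Hz. apply (is_series_sparse _ j).
  - intros N HN. apply bessel_array_upper, HN.
  - intros m. apply bessel_array_odd.
  - apply (is_series_ext (fun m => t ^ j * bessel_term j (INR j * z) m)).
    + intros m. symmetry. apply bessel_array_even.
    + apply (is_series_scal_l (t ^ j) _ (besselJ j (INR j * z))).
      apply Series_correct, bessel_ex_series, Hz.
Qed.

Lemma bessel_generating_series t z : Rabs t <= 1 -> 6 * Rabs z < 1 ->
  exists s : R,
    is_series (fun n => t ^ (n + 1) * besselJ (n + 1)%nat (INR (n + 1)%nat * z)) s /\
    is_series (fun n => A (n + 1)%nat t * z ^ (n + 1)) s.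
Proof.
  intros Ht Hz. pose proof (Rabs_pos z).
  destruct (triangular_series_interchange (bessel_array t z) (3 * Rabs z))
    as [L [Hcols Hdiags]]; try lra.
  - intros j N. apply bessel_array_bound, Ht.
  - intros j N. apply bessel_array_upper.
  - assert (Hcol0 : Series (bessel_array t z 0) = bessel_array t z 0 0).
    { apply is_series_unique, is_series_single. intros N. apply bessel_array_first_column. }
    exists (L - bessel_array t z 0 0). split.
    + apply (is_series_ext (fun j => Series (bessel_array t z (S j)))).
      * intros j. rewrite Nat.add_1_r. apply is_series_unique, bessel_array_column. lra.
      * rewrite <- Hcol0. apply (is_series_shift (fun j => Series (bessel_array t z j))), Hcols.
    + apply (is_series_ext (fun N => sum_f_R0 (fun j => bessel_array t z j (S N)) (S N))).
      * intros N. rewrite Nat.add_1_r. apply bessel_array_diag.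
      * apply (is_series_shift (fun N => sum_f_R0 (fun j => bessel_array t z j N) N)), Hdiags.
Qed.

Theorem mainTheorem2 :
  (forall (n : nat), (1 <= n)%nat ->
     (forall t : R,
        A n t = (-1) ^ n / INR (fact n) *
          sum_f_R0 (fun k => (-1) ^ k * Binomial.C n k * (INR k - INR n / 2) ^ n
                              * t ^ (n - 2 * k)) (Nat.div2 n))
     /\ A n 0 = 0
     /\ A n 1 = 1 / 2
     /\ (forall t : R, t <> 0 ->
        A n t + A n (/ t) = (-1) ^ n / INR (fact n) *
          sum_f_R0 (fun k => (-1) ^ k * Binomial.C n k * (INR k - INR n / 2) ^ n
                              * powerRZ t (Z.of_nat n - 2 * Z.of_nat k)%Z) n))
  /\
  (exists delta : R, 0 < delta /\
     forall t z : R, Rabs t < delta -> Rabs z < delta ->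
       exists s : R,
         is_series (fun n => t ^ (n+1) * besselJ (n+1)%nat (INR (n+1)%nat * z)) s /\
         is_series (fun n => A (n+1)%nat t * z ^ (n+1)) s).
Proof.
  split.
  - intros n Hn. repeat split.
    + apply A_closed_form.
    + apply A_0, Hn.
    + apply A_1, Hn.
    + intros t Ht. apply A_add_inv; assumption.
  - exists (1 / 7). split; [lra|].
    intros t z Ht Hz. apply bessel_generating_series; lra.
Qed.
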